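(* Let $S$ be any set, $m\ge 1$, and $s,s'\in S^m$. Then $s$ and $s'$ are mirrored if and only if $s=s'$ or $s=\mathrm{rev}\,s'$.
   Context: $\mathcal{S}_m$ is the group of bijections of $I_m=\{1,\ldots,m\}$, with $\sigma\circ\tau$ meaning apply $\tau$ first. $\mathscr{T}_m=\{\sigma\in\mathcal{S}_m \mid \exists t\in I_m:\ \sigma(1)>\sigma(2)>\cdots>\sigma(t)=1,\ \sigma(t)<\sigma(t+1)<\cdots<\sigma(m)\}$. A sequence $s\in S^m$ is viewed as a function $s:I_m\to S$, and $\mathcal{S}_m$ acts on $S^m$ on the left by $\sigma s=s\circ\sigma^{-1}$, i.e. $\sigma(s_1,\ldots,s_m)=(s_{\sigma^{-1}(1)},\ldots,s_{\sigma^{-1}(m)})$. For $i\in I_m$, $\tau_i(j)=i+1-j$ for $j\le i$ and $\tau_i(j)=j$ for $j>i$; $\mathrm{rev}\,s:=\tau_m s$ is the reversed sequence. Two sequences $s,s'\in S^m$ are called mirrored if for every $\sigma\in\mathscr{T}_m$ there exists $\sigma'\in\mathscr{T}_m$ with $\sigma s=\sigma' s'$, and for every $\tau'\in\mathscr{T}_m$ there exists $\tau\in\mathscr{T}_m$ with $\tau' s'=\tau s$. *)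

(* Indices are 0-based: I_m = {1..m} is rendered as 'I_m = {0..m-1}. *)
From mathcomp Require Import all_boot all_fingroup.
Set Implicit Arguments. Unset Strict Implicit. Unset Printing Implicit Defensive.

Local Open Scope group_scope.

Definition in_Tm (m : nat) (sigma : 'S_m) : Prop :=
  exists t : 'I_m,
    nat_of_ord (sigma t) = 0%N /\
    (forall i j : 'I_m, (i < j)%N -> (j <= t)%N -> (sigma j < sigma i)%N) /\
    (forall i j : 'I_m, (t <= i)%N -> (i < j)%N -> (sigma i < sigma j)%N).

(* A sequence s in S^m is a function 'I_m -> S; left action sigma s = s o sigma^-1. *)
Definition perm_act (S : Type) (m : nat) (sigma : 'S_m) (s : 'I_m -> S) : 'I_m -> S :=
  fun i => s (sigma^-1 i).

(* rev s = tau_m s, where tau_m (j) = m+1-j (1-based) i.e. rev_ord (0-based). *)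
Definition tau_m (m : nat) : 'S_m := perm (@rev_ord_inj m).

Definition rev_seq (S : Type) (m : nat) (s : 'I_m -> S) : 'I_m -> S :=
  perm_act (tau_m m) s.

Definition mirrored (S : Type) (m : nat) (s s' : 'I_m -> S) : Prop :=
  (forall sigma : 'S_m, in_Tm sigma ->
     exists2 sigma' : 'S_m, in_Tm sigma' & perm_act sigma s = perm_act sigma' s') /\
  (forall tau' : 'S_m, in_Tm tau' ->
     exists2 tau : 'S_m, in_Tm tau & perm_act tau' s' = perm_act tau s).

From mathcomp Require Import all_boot all_fingroup.
From mathcomp Require Import zify.
From Stdlib Require Import Classical FunctionalExtensionality.
Set Implicit Arguments. Unset Strict Implicit. Unset Printing Implicit Defensive.

(* For sigma in T_m the word sigma s starts with s at position sigma^-1(0) and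
   then grows the read interval by one position to the left or to the right;
   read backwards, it lists s by repeatedly removing a first or a last letter.
   Hence s and s' are mirrored iff the two words have the same "peelings", and
   it remains to see that the peelings of a word l determine l up to reversal.
   Write l = a^i u a^j where a is the first letter of l and u neither begins nor
   ends with a.  The longest runs of a's that can open a peeling, and the shortest
   runs after which a letter other than a can follow, show that the peelings
   determine i + j, min(i, j) and the peelings of u; by induction u is known up
   to reversal.  The remaining case, a^i u a^j against a^i (rev u) a^j with
   i < j, is settled by peeling off a^i and the first letter c of u = c u1:
   induction on what is left gives rev u = u directly, or the equations
   u1 a^j = a^j v and c u1 = v c, which force u to be a palindrome. *)

Lemma nseqSr (T : Type) n (a : T) : nseq n.+1 a = rcons (nseq n a) a.
Proof. by elim: n => //= n ->. Qed.

Section Peelings.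

Variable S : Type.
Implicit Types (a c x y : S) (l u v w : seq S).

Inductive peeling : seq S -> seq S -> Prop :=
| peeling_nil : peeling [::] [::]
| peeling_front x l w : peeling l w -> peeling (x :: l) (x :: w)
| peeling_back x l w : peeling l w -> peeling (rcons l x) (x :: w).

Definition same_peelings l l' := forall w, peeling l w <-> peeling l' w.

Lemma size_peeling l w : peeling l w -> size w = size l.
Proof. by elim=> //= [x l0 w0 _ ->|x l0 w0 _ ->]; rewrite ?size_rcons. Qed.

Lemma peeling_refl l : peeling l l.
Proof. by elim: l => [|x l IH]; [exact: peeling_nil | exact: peeling_front]. Qed.

Lemma peeling_rev l w : peeling l w -> peeling (rev l) w.
Proof.
elim=> [|x l0 w0 _ IH|x l0 w0 _ IH]; first exact: peeling_nil.
- by rewrite rev_cons; apply: peeling_back.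
- by rewrite rev_rcons; apply: peeling_front.
Qed.

Lemma peeling_revE l w : peeling (rev l) w <-> peeling l w.
Proof. by split=> [/peeling_rev|/peeling_rev //]; rewrite revK. Qed.

Lemma peeling_consP l y w : peeling l (y :: w) ->
  (exists2 l1, l = y :: l1 & peeling l1 w) \/
  (exists2 l1, l = rcons l1 y & peeling l1 w).
Proof. by move=> P; inversion P; subst; [left|right]; exists l0. Qed.

Lemma peeling_nseq n a w : peeling (nseq n a) w -> w = nseq n a.
Proof.
elim: n w => [|n IH] [|y w] P //; try by have := size_peeling P.
case: (peeling_consP P) => [[l1 [<- El] P1]|[l1 E P1]].
  by rewrite -El in P1; rewrite (IH _ P1).
rewrite nseqSr in E; case/rcons_inj: E => El <-.
by rewrite -El in P1; rewrite (IH _ P1).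
Qed.

Lemma same_peelings_rev l : same_peelings l (rev l).
Proof. by move=> w; rewrite peeling_revE. Qed.

Definition trimmed a u :=
  [/\ u <> [::], forall v, u <> a :: v & forall v, u <> rcons v a].

Lemma trimmed_rev a u : trimmed a u -> trimmed a (rev u).
Proof.
case=> un Nh Nl; split.
- by move/(congr1 size); rewrite size_rev => /size0nil.
- by move=> v E; apply: (Nl (rev v)); rewrite -rev_cons -E revK.
- by move=> v E; apply: (Nh (rev v)); rewrite -rev_rcons -E revK.
Qed.

Lemma trimmed_cat_cons a u v w : trimmed a u -> u ++ v <> a :: w.
Proof. by case: u => [[]//|c u [_ Nh _]] [E _]; apply: (Nh u); rewrite E. Qed.

Lemma trimmed_cat_rcons a u v w : trimmed a u -> v ++ u <> rcons w a.
Proof.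
case/lastP: u => [[]//|u z [_ _ Nl]].
by rewrite -rcons_cat => /rcons_inj [_ E]; apply: (Nl u); rewrite E.
Qed.

Lemma nseq_cat_trimmed_neq a u v i n :
  trimmed a u -> nseq i a ++ u ++ v <> nseq n a.
Proof.
move=> Tu; elim: i n => [|i IH] [|n] //=.
- by case: Tu; case: u.
- exact: trimmed_cat_cons.
- by case=> /IH.
Qed.

Lemma trimmed_decomposition a l : l = nseq (size l) a \/
  exists i u j, l = nseq i a ++ u ++ nseq j a /\ trimmed a u.
Proof.
elim: l => [|x l [E|[i [u [j [E Tu]]]]]]; first by left.
- case: (classic (x = a)) => [->|xa]; first by left; rewrite /= -E.
  right; exists 0, [:: x], (size l); split; first by rewrite /= -E.
  split=> // [v [//]|[|y v] [//]].
  by move=> _ /(congr1 size); rewrite size_rcons.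
- case: (classic (x = a)) => [xa|xa].
    by right; exists i.+1, u, j; rewrite E xa.
  right; exists 0, (x :: nseq i a ++ u), j; split; first by rewrite E /= catA.
  split=> // v E'; first by case: E'.
  exact: (trimmed_cat_rcons (v := x :: nseq i a) Tu E').
Qed.

Lemma peeling_nseq_front a n l w :
  peeling l w -> peeling (nseq n a ++ l) (nseq n a ++ w).
Proof. by elim: n => //= n IH /IH; apply: peeling_front. Qed.

Lemma peeling_nseq_back a n l w :
  peeling l w -> peeling (l ++ nseq n a) (nseq n a ++ w).
Proof.
elim: n => [|n IH]; first by rewrite cats0.
by rewrite {1}nseqSr -rcons_cat => /IH; apply: peeling_back.
Qed.

Lemma peeling_prepend_nseq a v p q i j w : p <= i -> q <= j ->
  peeling (nseq (i - p) a ++ v ++ nseq (j - q) a) w ->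
  peeling (nseq i a ++ v ++ nseq j a) (nseq (p + q) a ++ w).
Proof.
move=> Hp Hq /(peeling_nseq_front a p).
rewrite catA -nseqD subnKC // catA => /(peeling_nseq_back a q).
by rewrite -!catA -(nseqD (j - q)) subnK // addnC nseqD -catA.
Qed.

Section TrimmedCore.

Variables (a : S) (u : seq S).
Hypothesis Tu : trimmed a u.

Lemma peeling_strip_nseq i j k w :
  peeling (nseq i a ++ u ++ nseq j a) (nseq k a ++ w) ->
  exists p q, [/\ p <= i, q <= j, p + q = k &
                 peeling (nseq (i - p) a ++ u ++ nseq (j - q) a) w].
Proof.
elim: k i j w => [|k IH] i j w P; first by exists 0, 0; rewrite !subn0.
move: P => /peeling_consP [[l1 E P1]|[l1 E P1]].
- case: i E => [|i] /= E; first by case: (trimmed_cat_cons Tu E).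
  case: E => E; rewrite -E in P1.
  have [p [q [Hp Hq Hpq P2]]] := IH _ _ _ P1.
  by exists p.+1, q; rewrite subSS addSn Hpq.
- case: j E => [|j] E; first by move: E; rewrite cats0 => /(trimmed_cat_rcons Tu).
  rewrite nseqSr catA -rcons_cat in E.
  rewrite -(rcons_injl _ E) -catA in P1.
  have [p [q [Hp Hq Hpq P2]]] := IH _ _ _ P1.
  by exists p, q.+1; rewrite addnS Hpq subSS.
Qed.

Lemma peeling_nseq_prefix_leq i j k w :
  peeling (nseq i a ++ u ++ nseq j a) (nseq k a ++ w) -> k <= i + j.
Proof. by case/peeling_strip_nseq => p [q [Hp Hq <- _]]; lia. Qed.

Lemma peeling_strip_all_nseqE i j w :
  peeling (nseq i a ++ u ++ nseq j a) (nseq (i + j) a ++ w) <-> peeling u w.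
Proof.
split=> [|P].
  case/peeling_strip_nseq => p [q [Hp Hq Hpq]].
  have [-> ->] : i - p = 0 /\ j - q = 0 by lia.
  by rewrite cats0.
by apply: peeling_prepend_nseq => //; rewrite !subnn cats0.
Qed.

Lemma peeling_nseq_prefix_min c i j k w : c <> a ->
  peeling (nseq i a ++ u ++ nseq j a) (nseq k a ++ c :: w) -> minn i j <= k.
Proof.
move=> ca /peeling_strip_nseq [p [q [Hp Hq <-]]].
case/peeling_consP => -[l1 E _].
- case Eip: (i - p) E => [|i'] E; [lia | by case: E => /esym /ca].
- case Ejq: (j - q) E => [|j'] E; first lia.
  by move: E; rewrite nseqSr catA -rcons_cat => /rcons_inj [_ /esym /ca].
Qed.

Lemma exists_peeling_nseq_min i j : exists c w, c <> a /\
  peeling (nseq i a ++ u ++ nseq j a) (nseq (minn i j) a ++ c :: w).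
Proof.
case: (leqP i j) => ij.
  case: Tu; case: u => [//|c u1] _ Nh _; exists c, (u1 ++ nseq j a).
  by split; [move=> ca; apply: (Nh u1); rewrite ca | exact: peeling_refl].
have [] := trimmed_rev Tu; case Er: (rev u) => [//|c u1] _ Nh _.
exists c, (u1 ++ nseq i a); split; first by move=> ca; apply: (Nh u1); rewrite ca.
by apply/peeling_revE; rewrite !rev_cat !rev_nseq Er -catA; exact: peeling_refl.
Qed.

Lemma peeling_nseq_next_letter c i j w : i < j -> c <> a ->
  peeling (nseq i a ++ u ++ nseq j a) (nseq i a ++ c :: w) ->
  exists2 u1, u = c :: u1 & peeling (u1 ++ nseq j a) w.
Proof.
move=> ij ca /peeling_strip_nseq [p [q [Hp Hq Hpq]]].
case/peeling_consP => -[l1 E P].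
- case Eip: (i - p) E => [|i'] E; last by case: E => /esym /ca.
  have q0 : q = 0 by lia.
  rewrite q0 subn0 in E.
  case: u Tu E => [[]//|d u1] _ /= [<- E].
  by exists u1; rewrite // E.
- case Ejq: (j - q) E => [|j'] E; first lia.
  by move: E; rewrite nseqSr catA -rcons_cat => /rcons_inj [_ /esym /ca].
Qed.

End TrimmedCore.

Lemma conjugate_palindrome a c j u v : c <> a ->
  u ++ nseq j a = nseq j a ++ v -> c :: u = rcons v c -> rev (c :: u) = c :: u.
Proof.
move=> ca; elim: {u}(size u).+1 {-2}u (ltnSn (size u)) v => // n IH u su v E1 E2.
case: (ltnP (size u) j) => [uj|ju].
  case/lastP: u su E1 E2 uj => [//|u z] _ E1 E2; rewrite size_rcons => /ltnW uj.
  exfalso; apply: ca.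
  have /rcons_inj [_ <-] : rcons (c :: u) z = rcons v c by rewrite -E2.
  have := congr1 (nth z ^~ (size u)) E1.
  rewrite /= nth_cat size_rcons ltnSn nth_rcons ltnn eqxx nth_cat size_nseq.
  by rewrite nth_nseq uj => ->.
have [z Ex] : exists z, u = nseq j a ++ z.
  exists (drop j u); have := congr1 (take j) E1.
  by rewrite takel_cat // take_size_cat ?size_nseq // => <-; rewrite cat_take_drop.
rewrite {u ju}Ex in E1 E2 su *.
have {E1} Ey : v = z ++ nseq j a.
  by have := congr1 (drop j) E1; rewrite -catA !drop_size_cat ?size_nseq.
suff Rz : rev z = z by rewrite rev_cons rev_cat Rz rev_nseq E2 Ey.
case: z Ey E2 su => [//|d u1] -> /= [<-].
rewrite {1}(lastI c u1) -rcons_cat => /rcons_inj [Ej El] su.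
apply: (IH _ _ (belast c u1)); first by move: su; rewrite size_cat /=; lia.
  by rewrite Ej.
by rewrite {1}(lastI c u1) El.
Qed.

Lemma rev_nseq_cat a i u j :
  rev (nseq i a ++ u ++ nseq j a) = nseq j a ++ rev u ++ nseq i a.
Proof. by rewrite !rev_cat !rev_nseq catA. Qed.

Lemma same_peelings_trimmed a u u' i j i' j' : trimmed a u -> trimmed a u' ->
  same_peelings (nseq i a ++ u ++ nseq j a) (nseq i' a ++ u' ++ nseq j' a) ->
  same_peelings u u' /\ (i' = i /\ j' = j \/ i' = j /\ j' = i).
Proof.
move=> Tu Tu' E.
have sum_le : i' + j' <= i + j.
  apply: (peeling_nseq_prefix_leq Tu (w := u')); apply/E.
  by apply/peeling_strip_all_nseqE => //; exact: peeling_refl.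
have sum_ge : i + j <= i' + j'.
  apply: (peeling_nseq_prefix_leq Tu' (w := u)); apply/E.
  by apply/peeling_strip_all_nseqE => //; exact: peeling_refl.
have min_le : minn i j <= minn i' j'.
  have [c [w [ca /(E _).2 P]]] := exists_peeling_nseq_min Tu' i' j'.
  exact: (peeling_nseq_prefix_min Tu ca P).
have min_ge : minn i' j' <= minn i j.
  have [c [w [ca /(E _).1 P]]] := exists_peeling_nseq_min Tu i j.
  exact: (peeling_nseq_prefix_min Tu' ca P).
split; last by lia.
have sum_eq : i + j = i' + j' by lia.
by move=> w; rewrite -(peeling_strip_all_nseqE Tu i j) E sum_eq peeling_strip_all_nseqE.
Qed.

Definition peelings_determine_below n := forall l l',
  size l < n -> same_peelings l l' -> l' = l \/ l' = rev l.

Lemma same_peelings_rev_core_lt a u i j :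
  peelings_determine_below (size (nseq i a ++ u ++ nseq j a)) -> trimmed a u ->
  i < j -> same_peelings (nseq i a ++ u ++ nseq j a) (nseq i a ++ rev u ++ nseq j a) ->
  rev u = u.
Proof.
move=> IH Tu ij E; have Tr := trimmed_rev Tu.
case: u Tu Tr IH E => [[]//|c u] Tu Tr IH E.
have ca : c <> a by case: Tu => _ Nh _ ca; apply: (Nh u); rewrite ca.
have [u2 Eu2 _] := peeling_nseq_next_letter Tr ij ca
  ((E _).1 (peeling_refl (nseq i a ++ (c :: u) ++ nseq j a))).
have E' : same_peelings (u ++ nseq j a) (u2 ++ nseq j a).
  move=> w; split=> /(peeling_front c) /(peeling_nseq_front a i) P.
  - have /E /(peeling_nseq_next_letter Tr ij ca) [u1] := P.
    by rewrite Eu2 => -[<-].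
  - have /E /(peeling_nseq_next_letter Tu ij ca) [u1 [<-] //] :
      peeling (nseq i a ++ rev (c :: u) ++ nseq j a) (nseq i a ++ c :: w) by rewrite Eu2.
have sz : size (u ++ nseq j a) < size (nseq i a ++ (c :: u) ++ nseq j a).
  by rewrite !size_cat /=; lia.
have [Eu|Eu] := IH _ _ sz E'.
- have Sz : size u2 = size u by have := congr1 size Eu2; rewrite size_rev => -[].
  have := congr1 (take (size u)) Eu; rewrite -{1}Sz !take_size_cat // => Eu'.
  by rewrite Eu2 Eu'.
- apply: (conjugate_palindrome (j := j) (v := rev u2) ca).
    by have := congr1 rev Eu; rewrite revK !rev_cat rev_nseq => ->.
  by rewrite -rev_cons -Eu2 revK.
Qed.

Lemma same_peelings_rev_core a u i j :
  peelings_determine_below (size (nseq i a ++ u ++ nseq j a)) -> trimmed a u ->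
  i != j -> same_peelings (nseq i a ++ u ++ nseq j a) (nseq i a ++ rev u ++ nseq j a) ->
  rev u = u.
Proof.
move=> IH Tu; case: ltngtP => // [ij|ji] _ E; first exact: same_peelings_rev_core_lt E.
apply/esym; rewrite -{1}(revK u).
apply: (same_peelings_rev_core_lt _ (trimmed_rev Tu) ji).
  by rewrite -(size_rev (_ ++ _)) rev_nseq_cat revK.
by move=> w; rewrite revK -rev_nseq_cat peeling_revE E -peeling_revE rev_nseq_cat revK.
Qed.

Theorem same_peelingsP l l' : same_peelings l l' <-> l' = l \/ l' = rev l.
Proof.
split=> [|[->|->]]; [|by []|exact: same_peelings_rev].
elim: {l}(size l).+1 {-2}l (ltnSn (size l)) l' => // N IH l sl l' E.
case: l sl E => [|a l0] sl E.
  by left; have /size_peeling/size0nil := (E l').2 (peeling_refl l').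
have [El|[i [u [j [El Tu]]]]] := trimmed_decomposition a (a :: l0).
  by left; rewrite El; apply: peeling_nseq; rewrite -El; apply/E; exact: peeling_refl.
have [El'|[i' [u' [j' [El' Tu']]]]] := trimmed_decomposition a l'.
  have /peeling_nseq : peeling (nseq (size l') a) (a :: l0).
    by rewrite -El'; apply/E; exact: peeling_refl.
  by rewrite El => /nseq_cat_trimmed_neq.
have i0 : 0 < i by case: i El => // El; case: (trimmed_cat_cons (w := l0) Tu (esym El)).
rewrite {}El {}El' {l0} in sl E *.
have IH' : peelings_determine_below (size (nseq i a ++ u ++ nseq j a)).
  by move=> l1 l2 s1; apply: IH; apply: leq_trans s1 sl.
have [Eu Eij] := same_peelings_trimmed Tu Tu' E.
have su : size u < N by move: sl; rewrite !size_cat !size_nseq; lia.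
have flip : same_peelings (nseq i a ++ u ++ nseq j a) (nseq i a ++ rev u ++ nseq j a) ->
    nseq i a ++ rev u ++ nseq j a = nseq i a ++ u ++ nseq j a \/
    nseq i a ++ rev u ++ nseq j a = rev (nseq i a ++ u ++ nseq j a).
  case: (eqVneq i j) => [<- _|nij F]; first by right; rewrite rev_nseq_cat.
  by left; rewrite (same_peelings_rev_core IH' Tu nij F).
case: Eij E => -[-> ->]; case: (IH u su u' Eu) => -> E.
- by left.
- exact: flip E.
- have F : same_peelings (nseq i a ++ u ++ nseq j a) (nseq i a ++ rev u ++ nseq j a).
    by move=> w; rewrite E -peeling_revE rev_nseq_cat.
  have -> : nseq j a ++ u ++ nseq i a = rev (nseq i a ++ rev u ++ nseq j a).
    by rewrite rev_nseq_cat revK.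
  by case: (flip F) => ->; [right | left; rewrite revK].
- by right; rewrite rev_nseq_cat.
Qed.

End Peelings.

(* The counterpart of [in_Tm] for functions on [0, m): a bijection decreasing
   down to [0] and increasing afterwards, i.e. without interior local maximum. *)
Definition valley (m : nat) (v : nat -> nat) :=
  [/\ forall j, j < m -> v j < m,
      forall i j, i < m -> j < m -> v i = v j -> i = j,
      forall k, k < m -> exists2 j, j < m & v j = k &
      forall i j k, i < j -> j < k -> k < m -> v j < v i \/ v j < v k].

Lemma eq_in_valley m v v' :
  (forall j, j < m -> v j = v' j) -> valley m v -> valley m v'.
Proof.
move=> E [Vr Vi Vs Vv]; split.
- by move=> j jm; rewrite -E //; apply: Vr.
- by move=> i j im jm; rewrite -!E //; apply: Vi.
- by move=> k km; have [j jm <-] := Vs k km; exists j; rewrite ?E.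
- by move=> i j k ij jk km; rewrite -!E; try lia; apply: Vv.
Qed.

Lemma valley_max_end m v : valley m.+1 v -> v 0 = m \/ v m = m.
Proof.
case=> Vr _ Vs Vv; have [j jm vj] := Vs m (ltnSn m).
have [j0|[jm'|/andP [j0 jlt]]] : j = 0 \/ j = m \/ 0 < j < m by lia.
- by left; rewrite j0 in vj.
- by right; rewrite jm' in vj.
have := Vr 0 (ltn0Sn m); have := Vr m (ltnSn m).
by case: (Vv 0 j m j0 jlt (ltnSn m)); rewrite vj; lia.
Qed.

Lemma valley_behead m v : valley m.+1 v -> v 0 = m -> valley m (fun j => v j.+1).
Proof.
move=> [Vr Vi Vs Vv] v0.
have vS j : j < m -> v j.+1 < m.
  move=> jm; have := Vr j.+1 jm.
  have : v j.+1 != v 0 by apply/eqP=> /(Vi j.+1 0 jm (ltn0Sn m)).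
  by rewrite v0; lia.
split=> //.
- by move=> i j im jm /(Vi i.+1 j.+1 im jm) [].
- move=> k km; have [[|j] jm vj] := Vs k (leqW km); last by exists j.
  by move: km; rewrite -vj v0 ltnn.
- by move=> i j k ij jk km; apply: Vv.
Qed.

Lemma valley_belast m v : valley m.+1 v -> v m = m -> valley m v.
Proof.
move=> [Vr Vi Vs Vv] vm.
have vlt j : j < m -> v j < m.
  move=> jm; have := Vr j (leqW jm); have : v j != v m.
    by apply/eqP=> /(Vi j m (leqW jm) (ltnSn m)) ej; rewrite ej ltnn in jm.
  by rewrite vm; lia.
split=> //.
- by move=> i j im jm; apply: Vi; apply: leqW.
- move=> k km; have [j jm vj] := Vs k (leqW km).
  have [jlt|ej] : j < m \/ j = m by lia.
    by exists j.
  by move: km; rewrite -vj ej vm ltnn.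
- by move=> i j k ij jk km; apply: Vv => //; apply: leqW.
Qed.

Lemma valley_cons m v :
  valley m v -> valley m.+1 (fun j => if j is j'.+1 then v j' else m).
Proof.
move=> [Vr Vi Vs Vv]; split.
- by move=> [|j] //= jm; apply: leqW; apply: Vr.
- move=> [|i] [|j] //= im jm; [move=> h | move=> h | by move/Vi->].
  + by have := Vr j jm; rewrite -h ltnn.
  + by have := Vr i im; rewrite h ltnn.
- move=> k km; have [kl|->] : k < m \/ k = m by lia.
    by have [j jm vj] := Vs k kl; exists j.+1.
  by exists 0.
- move=> [|i] [|j] [|k] //= ij jk km; last by apply: Vv.
  by left; apply: Vr; lia.
Qed.

Lemma valley_rcons m v :
  valley m v -> valley m.+1 (fun j => if j < m then v j else m).
Proof.
move=> [Vr Vi Vs Vv]; split.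
- by move=> j jm; case: ifP => // /Vr; apply: leqW.
- move=> i j im jm; case: ifPn => im'; case: ifPn => jm' //; try lia.
  + exact: Vi.
  + by move=> h; have := Vr i im'; rewrite h ltnn.
  + by move=> h; have := Vr j jm'; rewrite -h ltnn.
- move=> k km; have [kl|->] : k < m \/ k = m by lia.
    by have [j jm vj] := Vs k kl; exists j; rewrite ?jm //; apply: leqW.
  by exists m; rewrite ?ltnn.
- move=> i j k ij jk km; have [-> ->] : i < m /\ j < m by lia.
  by case: ifP => km'; [exact: Vv | right; apply: Vr; lia].
Qed.

Lemma peeling_of_valley S (x0 : S) m l u v :
  size l = m -> size u = m -> valley m v ->
  (forall j, j < m -> nth x0 u (v j) = nth x0 l j) -> peeling l (rev u).
Proof.
elim: m l u v => [|m IH] l u v sl su Vv E.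
  by rewrite (size0nil sl) (size0nil su); exact: peeling_nil.
case/lastP: u su E => [//|u y]; rewrite size_rcons rev_rcons => -[su] E.
have nth_u j : j < m -> nth x0 (rcons u y) j = nth x0 u j.
  by move=> jm; rewrite nth_rcons su jm.
have nth_y : nth x0 (rcons u y) m = y by rewrite nth_rcons su ltnn eqxx.
have [v0|vm] := valley_max_end Vv.
- have Vb := valley_behead Vv v0; case: (Vb) => Vr _ _ _.
  case: l sl E => [//|x l] [sl] E.
  have -> : x = y by rewrite -nth_y -v0 (E 0).
  apply/peeling_front/(IH _ _ _ sl su Vb) => j jm.
  by rewrite -nth_u ?Vr // (E j.+1).
- have Vb := valley_belast Vv vm; case: (Vb) => Vr _ _ _.
  case/lastP: l sl E => [//|l x]; rewrite size_rcons => -[sl] E.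
  have -> : x = y by rewrite -nth_y -vm E // nth_rcons sl ltnn eqxx.
  apply/peeling_back/(IH _ _ _ sl su Vb) => j jm.
  by rewrite -nth_u ?Vr // E ?nth_rcons ?sl ?jm //; apply: leqW.
Qed.

Lemma valley_of_peeling S (x0 : S) l w : peeling l w -> exists v, valley (size l) v /\
  forall j, j < size l -> nth x0 (rev w) (v j) = nth x0 l j.
Proof.
elim=> {l w} [|x l w P [v [Vv E]]|x l w P [v [Vv E]]].
- by exists id; split=> //; split=> // k k0; exists k.
- exists (fun j => if j is j'.+1 then v j' else size l); split; first exact: valley_cons.
  case: Vv => Vr _ _ _ [|j] /= jl;
    rewrite rev_cons nth_rcons size_rev (size_peeling P).
    by rewrite ltnn eqxx.
  by rewrite Vr // E.
- exists (fun j => if j < size l then v j else size l); split.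
    by rewrite size_rcons; exact: valley_rcons.
  case: Vv => Vr _ _ _ j.
  rewrite size_rcons rev_cons nth_rcons size_rev (size_peeling P).
  rewrite ltnS leq_eqVlt => /predU1P [->|jl]; first by rewrite !ltnn eqxx nth_rcons ltnn eqxx.
  by rewrite jl Vr // E // nth_rcons jl.
Qed.

Local Open Scope group_scope.

Definition perm_nat n (g : 'S_n.+1) (j : nat) : nat := g (inord j).

Lemma perm_nat_ord n (g : 'S_n.+1) (i : 'I_n.+1) : perm_nat g i = g i.
Proof. by rewrite /perm_nat inord_val. Qed.

Lemma valley_of_Tm n (g : 'S_n.+1) : in_Tm g -> valley n.+1 (perm_nat g).
Proof.
move=> [t [_ [decr incr]]]; split.
- by move=> j _; apply: ltn_ord.
- move=> i j im jm /val_inj /perm_inj /(congr1 val).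
  by rewrite /= !inordK.
- move=> k km; exists (g^-1 (inord k) : nat) => //.
  by rewrite perm_nat_ord permKV inordK.
- move=> i j k ij jk km; have [im jm] : i < n.+1 /\ j < n.+1 by lia.
  case: (leqP j t) => jt; [left; apply: decr | right; apply: incr];
    rewrite ?inordK //; lia.
Qed.

Lemma Tm_of_valley n (g : 'S_n.+1) : valley n.+1 (perm_nat g) -> in_Tm g.
Proof.
move=> [_ _ _ Vv]; set t := g^-1 (inord 0).
have g_t : (g t : nat) = 0 by rewrite /t permKV inordK.
have noPeak (i j k : 'I_n.+1) : i < j -> j < k -> g j < g i \/ g j < g k.
  by move=> ij jk; rewrite -!perm_nat_ord; apply: Vv => //; apply: ltn_ord.
have g_pos (i : 'I_n.+1) : i != t -> 0 < g i.
  by apply: contraNT; rewrite -eqn0Ngt -g_t => /eqP /val_inj /perm_inj ->.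
exists t; split=> //; split.
- move=> i j ij; rewrite leq_eqVlt => /predU1P [jt|jt].
    rewrite (val_inj jt) g_t g_pos //; apply/eqP => it.
    by move: ij; rewrite it jt ltnn.
  by case: (noPeak i j t ij jt); rewrite ?g_t.
- move=> i j; rewrite leq_eqVlt => /predU1P [ti|ti] ij.
    rewrite -(val_inj ti) g_t g_pos //; apply/eqP => jt.
    by move: ij; rewrite jt -ti ltnn.
  by case: (noPeak t i j ti ij); rewrite ?g_t.
Qed.

Lemma exists_Tm_of_valley n v : valley n.+1 v ->
  exists2 g : 'S_n.+1, in_Tm g & forall j, j < n.+1 -> perm_nat g j = v j.
Proof.
move=> Vv; case: (Vv) => Vr Vi _ _.
have v_inj : injective (fun i : 'I_n.+1 => (inord (v i) : 'I_n.+1)).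
  move=> i j /(congr1 val); rewrite /= !inordK ?Vr // => /(Vi _ _ (ltn_ord i) (ltn_ord j)).
  exact: val_inj.
have Eg j : j < n.+1 -> perm_nat (perm v_inj) j = v j.
  by move=> jm; rewrite /perm_nat permE /= !inordK ?Vr.
by exists (perm v_inj) => //; apply: Tm_of_valley; apply: eq_in_valley Vv => j /Eg.
Qed.

Section Words.

Variable S : Type.

Definition word m (s : 'I_m -> S) : seq S := [seq s i | i <- enum 'I_m].

Lemma size_word m (s : 'I_m -> S) : size (word s) = m.
Proof. by rewrite size_map size_enum_ord. Qed.

Lemma nth_word m (s : 'I_m -> S) x0 (i : 'I_m) : nth x0 (word s) i = s i.
Proof. by rewrite (nth_map i) ?size_enum_ord // nth_ord_enum. Qed.

Lemma word_inj m : injective (@word m).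
Proof.
move=> s s' /eq_in_map E; apply: functional_extensionality => i.
by apply: E; rewrite mem_enum.
Qed.

Lemma word_rev_seq n (s : 'I_n.+1 -> S) : word (rev_seq s) = rev (word s).
Proof.
apply: (@eq_from_nth _ (s ord0)); first by rewrite size_rev !size_word.
move=> k; rewrite size_word => kn; have -> : k = Ordinal kn by [].
rewrite nth_word nth_rev size_word // /rev_seq /perm_act.
have -> : n.+1 - (Ordinal kn).+1 = rev_ord (Ordinal kn) by [].
rewrite nth_word; congr s; apply: (@perm_inj _ (tau_m n.+1)).
by rewrite permKV /tau_m permE rev_ordK.
Qed.

Lemma peeling_wordP n (s : 'I_n.+1 -> S) w :
  peeling (word s) w <-> exists2 g : 'S_n.+1, in_Tm g & word (perm_act g s) = rev w.
Proof.
split=> [P|[g Tg Eg]].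
- have [v []] := valley_of_peeling (s ord0) P; rewrite size_word => Vv E.
  have [g Tg Eg] := exists_Tm_of_valley Vv; exists g => //.
  apply: (@eq_from_nth _ (s ord0)); first by rewrite size_rev (size_peeling P) !size_word.
  move=> k; rewrite size_word => kn; have -> : k = Ordinal kn by [].
  set J := g^-1 (Ordinal kn).
  have vJ : v J = Ordinal kn by rewrite -Eg // perm_nat_ord permKV.
  by rewrite nth_word -vJ E // nth_word.
- rewrite -[w]revK -Eg.
  apply: (@peeling_of_valley _ (s ord0) n.+1 _ _ (perm_nat g)); rewrite ?size_word //.
    exact: valley_of_Tm.
  move=> j jn; have -> : j = Ordinal jn by [].
  by rewrite perm_nat_ord !nth_word /perm_act permK.
Qed.

Lemma Tm_orbit_sub_peelings n (s s' : 'I_n.+1 -> S) :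
  (forall g, in_Tm g -> exists2 g', in_Tm g' & perm_act g s = perm_act g' s') <->
  (forall w, peeling (word s) w -> peeling (word s') w).
Proof.
split=> [sub w /peeling_wordP [g /sub [g' Tg' ->] Eg]|sub g Tg].
  by apply/peeling_wordP; exists g'.
have /sub /peeling_wordP [g' Tg' Eg'] : peeling (word s) (rev (word (perm_act g s))).
  by apply/peeling_wordP; exists g; rewrite ?revK.
by exists g'; rewrite // (word_inj (etrans Eg' (revK _))).
Qed.

End Words.

Lemma mirrored_same_peelings S n (s s' : 'I_n.+1 -> S) :
  mirrored s s' <-> same_peelings (word s) (word s').
Proof.
rewrite /mirrored !Tm_orbit_sub_peelings.
by split=> [[sub sub'] w | E]; [split; [apply: sub | apply: sub'] | split=> w /E].
Qed.

Local Close Scope group_scope.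
Unset Implicit Arguments.

Theorem mainTheorem9 (S : Type) (m : nat) (hm : (1 <= m)%N) (s s' : 'I_m -> S) :
  mirrored s s' <-> (s = s' \/ s = rev_seq s').
Proof.
case: m hm s s' => [//|n] _ s s'.
rewrite mirrored_same_peelings same_peelingsP.
split=> [[/word_inj -> | E] | [-> | ->]]; [by left | right | by left | right].
- by apply: word_inj; rewrite word_rev_seq E revK.
- by rewrite word_rev_seq revK.
Qed.
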